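(* Let $n\ge1$, $m\in\mathbb{Z}_{>0}$, $q,q_0,q_1\in(-1,1)$. Let $\boldsymbol{\xi}\in\mathbb{R}^n$ with $\xi_j\notin\pi\mathbb{Z}$ and $\xi_j\pm\xi_k\notin2\pi\mathbb{Z}$ ($j\ne k$) satisfy, for $j=1,\dots,n$, \[ e^{2i(m+1)\xi_j}=\frac{1-q_0e^{i\xi_j}}{e^{i\xi_j}-q_0}\cdot\frac{1-q_1e^{i\xi_j}}{e^{i\xi_j}-q_1}\prod_{k\ne j}\frac{1-qe^{i(\xi_j+\xi_k)}}{e^{i(\xi_j+\xi_k)}-q}\cdot\frac{1-qe^{i(\xi_j-\xi_k)}}{e^{i(\xi_j-\xi_k)}-q}. \] Then for every $\mu\in\mathbb{Z}^n$ with $\mu_1=m+1$, $P_{\texttt{b};\mu}(\boldsymbol{\xi};q,q_0)=q_1\,P_{\texttt{b};\mu-e_1}(\boldsymbol{\xi};q,q_0)$.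
   Context: $e_1,\dots,e_n$ is the standard basis of $\mathbb{R}^n$. $C_{\texttt{b}}(\boldsymbol{\xi};q,q_0)=\prod_{j=1}^n\frac{1-q_0e^{-i\xi_j}}{1-e^{-2i\xi_j}}\prod_{1\le j<k\le n}\frac{1-qe^{-i(\xi_j-\xi_k)}}{1-e^{-i(\xi_j-\xi_k)}}\cdot\frac{1-qe^{-i(\xi_j+\xi_k)}}{1-e^{-i(\xi_j+\xi_k)}}$ and $P_{\texttt{b};\mu}(\boldsymbol{\xi};q,q_0)=\sum_{\sigma\in S_n}\sum_{\epsilon\in\{1,-1\}^n}C_{\texttt{b}}(\epsilon_1\xi_{\sigma_1},\dots,\epsilon_n\xi_{\sigma_n};q,q_0)\exp(i\sum_j\epsilon_j\xi_{\sigma_j}\mu_j)$. *)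

From HB Require Import structures.
From mathcomp Require Import all_boot all_order all_algebra all_fingroup.
From mathcomp Require Import all_classical all_reals all_analysis.
From mathcomp Require Import complex.
Set Implicit Arguments. Unset Strict Implicit. Unset Printing Implicit Defensive.
Import Order.TTheory GRing.Theory Num.Theory.
Local Open Scope ring_scope.

Definition rC {R : realType} (r : R) : complex R := Complex r 0.

Definition expi {R : realType} (x : R) : complex R := Complex (cos x) (sin x).

Definition bsg {R : realType} (b : bool) : R := if b then -1 else 1.

Definition C_b {R : realType} (n : nat) (xi : 'I_n -> R) (q q0 : R) : complex R :=
  (\prod_(j < n) ((1 - rC q0 * expi (- xi j)) / (1 - expi (- (2 * xi j)))))
  * \prod_(j < n) \prod_(k < n | (j < k)%N)
      ((1 - rC q * expi (- (xi j - xi k))) / (1 - expi (- (xi j - xi k)))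
       * ((1 - rC q * expi (- (xi j + xi k))) / (1 - expi (- (xi j + xi k))))).

Definition P_b {R : realType} (n : nat) (mu : 'I_n -> int) (xi : 'I_n -> R) (q q0 : R)
  : complex R :=
  \sum_(s : 'S_n) \sum_(eps : {ffun 'I_n -> bool})
     C_b (fun j => bsg (eps j) * xi (s j)) q q0
     * expi (\sum_(j < n) bsg (eps j) * xi (s j) * (mu j)%:~R).

(* mu - e_1 (e_1 = first standard basis vector, index 0) *)
Definition minus_e1 (n : nat) (mu : 'I_n -> int) : 'I_n -> int :=
  fun j => if nat_of_ord j == 0%N then mu j - 1 else mu j.

From HB Require Import structures.
From mathcomp Require Import all_boot all_order all_algebra all_fingroup.
From mathcomp Require Import all_classical all_reals all_analysis.
From mathcomp Require Import complex.
From mathcomp Require Import ring lra.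
Import Order.TTheory GRing.Theory Num.Theory.
Local Open Scope ring_scope.

(* Write D = P_{b;mu} - q1 P_{b;mu-e1} as a
   sum over permutations s and sign vectors eps.  Splitting off the first
   coordinate u_1 = eps_1 xi_{s 1}, every summand is a factor depending only
   on the remaining signed angles times the "head term"
     Phi(u_1) = A(u_1) e^{i (m+1) u_1} (1 - q1 e^{-i u_1}),
   where A(u_1) collects the factors of C_b that involve u_1.  The Bethe
   equation for xi_{s 1} says exactly that Phi(u_1) + Phi(-u_1) = 0: the
   ratio of the C_b factors at u_1 and -u_1 is the two-body Bethe factor.
   Hence flipping eps_1 is a sign-reversing involution on the sign vectors,
   and each inner sum vanishes. *)

Section RationalIdentities.
Variable K : fieldType.

(* Two-body factor of C_b for Z = e^{-i a} and Y = e^{i b}. *)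
Definition cb_pair (q Z Y : K) : K :=
  (1 - q * (Z * Y)) / (1 - Z * Y) * ((1 - q * (Z * Y^-1)) / (1 - Z * Y^-1)).

(* Two-body factor of the Bethe equation for X = e^{i xi_j} and Y = e^{i xi_k}. *)
Definition bethe_pair (q X Y : K) : K :=
  (1 - q * (X * Y)) / (X * Y - q) * ((1 - q * (X * Y^-1)) / (X * Y^-1 - q)).

Lemma bethe_pairV (q X Y : K) : bethe_pair q X Y^-1 = bethe_pair q X Y.
Proof. by rewrite /bethe_pair invrK mulrC. Qed.

Lemma subr_neq0_sym {a b : K} : a - b != 0 -> b - a != 0.
Proof. by rewrite -opprB oppr_eq0. Qed.

Lemma cb_pair_reflect (q X Y : K) :
  X != 0 -> Y != 0 -> Y - X != 0 -> 1 - X * Y != 0 ->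
  X - q * Y != 0 -> X * Y - q != 0 ->
  cb_pair q X^-1 Y * bethe_pair q X Y = cb_pair q X Y.
Proof.
move=> X0 Y0 YX XY XqY XYq; rewrite /cb_pair /bethe_pair.
have XY' := subr_neq0_sym YX; have XY'' := subr_neq0_sym XY.
field.
by rewrite Y0 YX XY XYq X0 XY' XY'' mulNr XqY.
Qed.

(* Algebraic core of the theorem: if X satisfies the Bethe equation of degree
   2 m with respect to Y_1, ..., Y_n, the head terms at X and at X^-1 cancel. *)
Lemma bethe_reflection (q q0 q1 X : K) (n m : nat) (Y : 'I_n -> K) :
  X != 0 -> 1 - X * X != 0 -> X - q0 != 0 -> X - q1 != 0 ->
  1 - q0 * X != 0 -> 1 - q1 * X != 0 ->
  (forall k, [/\ Y k != 0, Y k - X != 0, 1 - X * Y k != 0, X - q * Y k != 0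
                 & X * Y k - q != 0]) ->
  X ^+ (2 * m) = (1 - q0 * X) / (X - q0) * ((1 - q1 * X) / (X - q1))
                 * \prod_k bethe_pair q X (Y k) ->
  (1 - q0 * X^-1) / (1 - X^-1 * X^-1) * \prod_k cb_pair q X^-1 (Y k)
    * X ^+ m * (1 - q1 * X^-1)
  + (1 - q0 * X) / (1 - X * X) * \prod_k cb_pair q X (Y k)
    * X^-1 ^+ m * (1 - q1 * X) = 0.
Proof.
move=> X0 XX Xq0 Xq1 q0X q1X Ygood bethe.
have -> : \prod_k cb_pair q X (Y k)
          = \prod_k cb_pair q X^-1 (Y k) * \prod_k bethe_pair q X (Y k).
  rewrite -big_split /=; apply: eq_bigr => k _.
  by case: (Ygood k) => *; rewrite cb_pair_reflect.
have boundary_neq0 : (1 - q0 * X) / (X - q0) * ((1 - q1 * X) / (X - q1)) != 0.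
  by rewrite !mulf_neq0 // invr_eq0.
have -> : \prod_k bethe_pair q X (Y k) = X ^+ (2 * m)
          / ((1 - q0 * X) / (X - q0) * ((1 - q1 * X) / (X - q1))).
  by rewrite bethe mulrC mulKf.
rewrite mulnC exprM exprVn.
set Z := X ^+ m; set P := \prod_k _.
have Z0 : Z != 0 by rewrite expf_neq0.
have XXV : 1 - X^-1 * X^-1 != 0.
  have -> : 1 - X^-1 * X^-1 = (X * X - 1) / (X * X) by field.
  by rewrite mulf_neq0 // ?invr_eq0 ?mulf_neq0 // subr_neq0_sym.
field.
by rewrite Z0 Xq1 Xq0 q1X q0X XX X0 (subr_neq0_sym XX).
Qed.

End RationalIdentities.
Arguments cb_pair {K}.
Arguments bethe_pair {K}.

Lemma sum_sign_reversing (V : numDomainType) (I : finType) (f : I -> I) (F : I -> V) :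
  involutive f -> (forall i, F (f i) = - F i) -> \sum_i F i = 0.
Proof.
move=> fK Ff; have : \sum_i F i = - \sum_i F i.
  by rewrite {1}(reindex_inj (inv_inj fK)) -sumrN; apply: eq_bigr => i _; rewrite Ff.
by move/eqP; rewrite -addr_eq0 -mulr2n mulrn_eq0 => /eqP.
Qed.

Lemma prod_neq_perm_first (V : comNzRingType) (n : nat) (s : 'S_n.+1)
    (G : 'I_n.+1 -> V) :
  \prod_(k < n.+1 | k != s ord0) G k = \prod_(k < n) G (s (lift ord0 k)).
Proof.
rewrite (reindex_inj (@perm_inj _ s)) /=.
rewrite (eq_bigl (fun k => k != ord0)); last by move=> k; rewrite (inj_eq (@perm_inj _ s)).
by rewrite big_mkcond big_ord_recl eqxx /= mul1r.
Qed.

Section Expi.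
Variable R : realType.

Lemma expiD (a b : R) : expi (a + b) = expi a * expi b.
Proof. by rewrite /expi cosD sinD; congr Complex; rewrite addrC. Qed.

Lemma expi0 : expi (0 : R) = 1.
Proof. by rewrite /expi cos0 sin0. Qed.

Lemma expi_neq0 (a : R) : expi a != 0.
Proof.
apply/eqP => /(congr1 (fun z => (complex.Re z, complex.Im z))) /= -[ca sa].
by have := cos2Dsin2 a; rewrite ca sa expr0n addr0 => /eqP; rewrite eq_sym oner_eq0.
Qed.

Lemma expiN (a : R) : expi (- a) = (expi a)^-1.
Proof. by apply: (mulIf (expi_neq0 a)); rewrite -expiD addNr expi0 mulVf ?expi_neq0. Qed.

Lemma expi_natr (a : R) (k : nat) : expi (a * k%:R) = expi a ^+ k.
Proof.
elim: k => [|k IH]; first by rewrite mulr0 expi0.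
by rewrite exprS -IH -expiD mulrS mulrDr mulr1.
Qed.

Lemma expi_2pi_int (z : int) : expi (z%:~R * (2 * pi) : R) = 1.
Proof.
have e2pi : expi (2 * pi : R) = 1 by rewrite /expi mulr_natl cos2pi sin2pi.
case: z => k; first by rewrite /= mulrC expi_natr e2pi expr1n.
by rewrite NegzE rmorphN /= mulNr expiN mulrC expi_natr e2pi expr1n invr1.
Qed.

(* e^{i c} = 1 only for c in 2 pi Z: reduce c modulo 2 pi into [0, 2 pi) and use
   the injectivity of cos on [0, pi]. *)
Lemma expi_eq1 (c : R) : expi c = 1 -> exists z : int, c = z%:~R * (2 * pi).
Proof.
move=> ec; have pi0 := pi_gt0 R; have two_pi0 : 0 < 2 * pi :> R by lra.
exists (Num.floor (c / (2 * pi))).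
set r := c - (Num.floor (c / (2 * pi)))%:~R * (2 * pi).
have r_ge0 : 0 <= r by rewrite subr_ge0 -ler_pdivlMr // floor_le.
have r_lt : r < 2 * pi.
  have := floorD1_gt (c / (2 * pi)).
  by rewrite ltr_pdivrMr // rmorphD /= mulrDl mul1r /r; lra.
have : expi r = 1 by rewrite /r expiD expiN expi_2pi_int invr1 mulr1.
move=> /(congr1 (fun z => (complex.Re z, complex.Im z))) /= -[cr sr].
suff r0 : r = 0 by apply/eqP; rewrite -subr_eq0 -/r r0.
have zero_in : (0 : R) \in `[0, pi] by rewrite in_itv /= lexx pi_ge0.
case: (lerP r pi) => r_pi.
  by apply: cos_inj => //; rewrite ?in_itv /= ?r_ge0 ?r_pi // cos0 cr.
suff : 2 * pi - r = 0 by lra.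
apply: cos_inj => //; first by rewrite in_itv /=; apply/andP; split; lra.
by rewrite cosB mulr_natl cos2pi sin2pi cr sr cos0 !mulr1 mulr0 addr0.
Qed.

Lemma expi_sub_neq0 (c d : R) :
  (forall z : int, c - d != z%:~R * (2 * pi)) -> expi c - expi d != 0.
Proof.
move=> cd; apply/negP; rewrite subr_eq0 => /eqP e.
have : expi (c - d) = 1 by rewrite expiD expiN e mulfV // expi_neq0.
by case/expi_eq1 => z cdz; move: (cd z); rewrite cdz eqxx.
Qed.

Lemma expi_sub_scaled_neq0 (r a b : R) : -1 < r < 1 -> expi a - rC r * expi b != 0.
Proof.
move=> /andP[r_gtN1 r_lt1]; apply/eqP.
move=> /(congr1 (fun z => (complex.Re z, complex.Im z))) /=.
rewrite !mul0r subr0 addr0 => -[/eqP + /eqP]; rewrite !subr_eq0 => /eqP ca /eqP sa.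
have := cos2Dsin2 a; rewrite ca sa !exprMn -mulrDr cos2Dsin2 mulr1 => /eqP.
by rewrite sqrf_eq1 => /orP[] /eqP r1; lra.
Qed.

Lemma not_2pi_multN (c : R) :
  (forall z : int, c != z%:~R * (2 * pi)) -> forall z : int, - c != z%:~R * (2 * pi).
Proof. by move=> c2pi z; rewrite -[X in _ != X]opprK eqr_opp -mulNr -rmorphN c2pi. Qed.

End Expi.

Section Factorisation.
Context {R : realType}.

Definition cb_pair_angle (q a b : R) : complex R :=
  (1 - rC q * expi (- (a - b))) / (1 - expi (- (a - b)))
  * ((1 - rC q * expi (- (a + b))) / (1 - expi (- (a + b)))).

Lemma cb_pair_angleE (q a b : R) :
  cb_pair_angle q a b = cb_pair (rC q) (expi a)^-1 (expi b).
Proof. by rewrite /cb_pair_angle /cb_pair opprB opprD !expiD !expiN [expi b / _]mulrC. Qed.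

Definition cb_head {n : nat} (q q0 a : R) (v : 'I_n -> R) : complex R :=
  (1 - rC q0 * expi (- a)) / (1 - expi (- (2 * a))) * \prod_(k < n) cb_pair_angle q a (v k).

Lemma C_b_split (n : nat) (u : 'I_n.+1 -> R) (q q0 : R) :
  C_b u q q0 = cb_head q q0 (u ord0) (fun k => u (lift ord0 k))
               * C_b (fun k => u (lift ord0 k)) q q0.
Proof.
rewrite /C_b /cb_head big_ord_recl [X in _ * X]big_ord_recl.
rewrite [X in _ * (X * _)]big_mkcond big_ord_recl /= mul1r.
under [X in _ * (_ * X)]eq_bigr => i _ do
  rewrite big_mkcond big_ord_recl /= mul1r -big_mkcond /=.
by rewrite -!mulrA; congr (_ * (_ * _)); exact: mulrCA.
Qed.

Definition head_term {n : nat} (q q0 q1 : R) (m : nat) (a : R) (v : 'I_n -> R)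
  : complex R :=
  cb_head q q0 a v * expi (a * (m.+1)%:R) * (1 - rC q1 * expi (- a)).

Lemma summand_difference (n : nat) (mu : 'I_n.+1 -> int) (m : nat) (q q0 q1 : R)
    (u : 'I_n.+1 -> R) :
  mu ord0 = (m.+1)%:Z ->
  C_b u q q0 * expi (\sum_(j < n.+1) u j * (mu j)%:~R)
  - rC q1 * (C_b u q q0 * expi (\sum_(j < n.+1) u j * (minus_e1 mu j)%:~R))
  = C_b (fun k => u (lift ord0 k)) q q0
    * expi (\sum_(k < n) u (lift ord0 k) * (mu (lift ord0 k))%:~R)
    * head_term q q0 q1 m (u ord0) (fun k => u (lift ord0 k)).
Proof.
move=> mu0; rewrite C_b_split /head_term !big_ord_recl /minus_e1 /= mu0.
rewrite rmorphB /= mulrBr mulr1 -addrA [- _ + _]addrC addrA !expiD expiN.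
set A := cb_head _ _ _ _; set C := C_b _ _ _; set E := expi (\sum_(i < n) _).
ring.
Qed.

Lemma head_termE (n : nat) (q q0 q1 : R) (m : nat) (a : R) (v : 'I_n -> R) :
  head_term q q0 q1 m a v
  = (1 - rC q0 * (expi a)^-1) / (1 - (expi a)^-1 * (expi a)^-1)
    * \prod_(k < n) cb_pair (rC q) (expi a)^-1 (expi (v k))
    * expi a ^+ m.+1 * (1 - rC q1 * (expi a)^-1).
Proof.
rewrite /head_term /cb_head mulr_natl mulr2n opprD expiD !expiN expi_natr.
by under eq_bigr => k _ do rewrite cb_pair_angleE.
Qed.

Lemma head_term_odd {n : nat} {q q0 q1 : R} {m : nat} {x0 : R} {v : 'I_n -> R} :
  -1 < q < 1 -> -1 < q0 < 1 -> -1 < q1 < 1 ->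
  (forall z : int, x0 != z%:~R * pi) ->
  (forall k (z : int), (x0 + v k != z%:~R * (2 * pi)) /\ (x0 - v k != z%:~R * (2 * pi))) ->
  expi x0 ^+ (2 * m.+1) = (1 - rC q0 * expi x0) / (expi x0 - rC q0)
     * ((1 - rC q1 * expi x0) / (expi x0 - rC q1))
     * \prod_k bethe_pair (rC q) (expi x0) (expi (v k)) ->
  head_term q q0 q1 m x0 v + head_term q q0 q1 m (- x0) v = 0.
Proof.
move=> hq hq0 hq1 x0_pi x0_v bethe.
rewrite !head_termE expiN invrK.
have shift r : expi x0 - rC r = expi x0 - rC r * expi 0 by rewrite expi0 mulr1.
have shift' r : 1 - rC r * expi x0 = expi 0 - rC r * expi x0 by rewrite expi0.
have x0_2pi z : 0 - (x0 + x0) != z%:~R * (2 * pi).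
  rewrite sub0r; apply: not_2pi_multN => {}z; apply/eqP => e.
  move/eqP: (x0_pi z); apply; apply: (@mulfI _ 2); first by rewrite pnatr_eq0.
  by rewrite mulr_natl mulr2n e mulrCA.
apply: bethe_reflection => //.
- exact: expi_neq0.
- by rewrite -expiD -expi0 expi_sub_neq0.
- by rewrite shift expi_sub_scaled_neq0.
- by rewrite shift expi_sub_scaled_neq0.
- by rewrite shift' expi_sub_scaled_neq0.
- by rewrite shift' expi_sub_scaled_neq0.
move=> k; have x0_add z := (x0_v k z).1; have x0_sub z := (x0_v k z).2; split.
- exact: expi_neq0.
- by apply: expi_sub_neq0 => z; rewrite -opprB; apply: not_2pi_multN.
- by rewrite -expiD -expi0; apply: expi_sub_neq0 => z; rewrite sub0r not_2pi_multN.
- exact: expi_sub_scaled_neq0.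
- by rewrite -expiD -[X in _ - X]mulr1 -expi0 expi_sub_scaled_neq0.
Qed.

End Factorisation.

Section Cancellation.
Context {R : realType} {n m : nat} {q q0 q1 : R} {xi : 'I_n.+1 -> R}.
Hypotheses (hq : -1 < q < 1) (hq0 : -1 < q0 < 1) (hq1 : -1 < q1 < 1).
Hypothesis xi_pi : forall (j : 'I_n.+1) (z : int), xi j != z%:~R * pi.
Hypothesis xi_sep : forall (j k : 'I_n.+1) (z : int), j != k ->
  (xi j + xi k != z%:~R * (2 * pi)) /\ (xi j - xi k != z%:~R * (2 * pi)).
Hypothesis bethe : forall j : 'I_n.+1,
  expi (2 * (m.+1)%:R * xi j) =
    (1 - rC q0 * expi (xi j)) / (expi (xi j) - rC q0)
    * ((1 - rC q1 * expi (xi j)) / (expi (xi j) - rC q1))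
    * \prod_(k < n.+1 | k != j)
        ((1 - rC q * expi (xi j + xi k)) / (expi (xi j + xi k) - rC q)
         * ((1 - rC q * expi (xi j - xi k)) / (expi (xi j - xi k) - rC q))).
Context {s : 'S_n.+1}.

Definition tail_angle (eps : {ffun 'I_n.+1 -> bool}) (k : 'I_n) : R :=
  bsg (eps (lift ord0 k)) * xi (s (lift ord0 k)).

Definition flip_first (eps : {ffun 'I_n.+1 -> bool}) : {ffun 'I_n.+1 -> bool} :=
  [ffun j => if j == ord0 then ~~ eps j else eps j].

Lemma flip_firstK : involutive flip_first.
Proof. by move=> eps; apply/ffunP => j; rewrite !ffunE; case: eqP => //= _; exact: negbK. Qed.

Lemma flip_first0 (eps : {ffun 'I_n.+1 -> bool}) : flip_first eps ord0 = ~~ eps ord0.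
Proof. by rewrite ffunE eqxx. Qed.

Lemma tail_angle_flip (eps : {ffun 'I_n.+1 -> bool}) :
  tail_angle (flip_first eps) = tail_angle eps.
Proof. by apply: funext => k; rewrite /tail_angle ffunE eq_sym (negbTE (neq_lift _ _)). Qed.

Lemma bsg_negb (b : bool) (x : R) : bsg (~~ b) * x = - (bsg b * x).
Proof. by case: b; rewrite /bsg /= ?mulN1r ?mul1r ?opprK. Qed.

Lemma tail_angle_sep (eps : {ffun 'I_n.+1 -> bool}) (k : 'I_n) (z : int) :
  (xi (s ord0) + tail_angle eps k != z%:~R * (2 * pi))
  /\ (xi (s ord0) - tail_angle eps k != z%:~R * (2 * pi)).
Proof.
have s0k : s ord0 != s (lift ord0 k) by rewrite (inj_eq (@perm_inj _ s)) neq_lift.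
case: (xi_sep _ _ z s0k) => sep_add sep_sub.
by rewrite /tail_angle; case: (eps _); rewrite /bsg /= ?mul1r ?mulN1r ?opprK.
Qed.

Lemma bethe_tail (eps : {ffun 'I_n.+1 -> bool}) :
  expi (xi (s ord0)) ^+ (2 * m.+1) =
    (1 - rC q0 * expi (xi (s ord0))) / (expi (xi (s ord0)) - rC q0)
    * ((1 - rC q1 * expi (xi (s ord0))) / (expi (xi (s ord0)) - rC q1))
    * \prod_k bethe_pair (rC q) (expi (xi (s ord0))) (expi (tail_angle eps k)).
Proof.
rewrite -expi_natr natrM mulrC bethe prod_neq_perm_first; congr (_ * _).
apply: eq_bigr => k _; rewrite /tail_angle.
have -> : bethe_pair (rC q) (expi (xi (s ord0)))
            (expi (bsg (eps (lift ord0 k)) * xi (s (lift ord0 k))))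
          = bethe_pair (rC q) (expi (xi (s ord0))) (expi (xi (s (lift ord0 k)))).
  by case: (eps _); rewrite /bsg ?mul1r // mulN1r expiN bethe_pairV.
by rewrite /bethe_pair !expiD expiN.
Qed.

Lemma head_term_flip (eps : {ffun 'I_n.+1 -> bool}) :
  head_term q q0 q1 m (bsg (~~ eps ord0) * xi (s ord0)) (tail_angle eps)
  = - head_term q q0 q1 m (bsg (eps ord0) * xi (s ord0)) (tail_angle eps).
Proof.
have odd := head_term_odd hq hq0 hq1 (xi_pi (s ord0)) (tail_angle_sep eps) (bethe_tail eps).
apply/eqP; rewrite bsg_negb -addr_eq0.
by case: (eps ord0); rewrite /bsg ?mul1r ?mulN1r ?opprK ?odd // addrC odd.
Qed.

Lemma perm_difference_vanishes {mu : 'I_n.+1 -> int} : mu ord0 = (m.+1)%:Z ->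
  \sum_(eps : {ffun 'I_n.+1 -> bool})
    (C_b (fun j => bsg (eps j) * xi (s j)) q q0
       * expi (\sum_(j < n.+1) bsg (eps j) * xi (s j) * (mu j)%:~R)
     - rC q1 * (C_b (fun j => bsg (eps j) * xi (s j)) q q0
       * expi (\sum_(j < n.+1) bsg (eps j) * xi (s j) * (minus_e1 mu j)%:~R))) = 0.
Proof.
move=> mu0.
pose tail_part eps := C_b (tail_angle eps) q q0
  * expi (\sum_(k < n) tail_angle eps k * (mu (lift ord0 k))%:~R).
rewrite (eq_bigr (fun eps => tail_part eps
           * head_term q q0 q1 m (bsg (eps ord0) * xi (s ord0)) (tail_angle eps))); last first.
  by move=> eps _; exact: (summand_difference _ _ _ _ _ _ (fun j => bsg (eps j) * xi (s j)) mu0).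
apply: (@sum_sign_reversing R[i] _ _ _ flip_firstK) => eps.
by rewrite /tail_part flip_first0 tail_angle_flip head_term_flip mulrN.
Qed.

End Cancellation.

Theorem mainTheorem10 (R : realType) (n : nat) (hn : (0 < n)%N) (m : nat) (hm : (0 < m)%N)
  (q q0 q1 : R)
  (hq : -1 < q < 1) (hq0 : -1 < q0 < 1) (hq1 : -1 < q1 < 1)
  (xi : 'I_n -> R)
  (hxi1 : forall (j : 'I_n) (z : int), xi j != z%:~R * pi)
  (hxi2 : forall (j k : 'I_n) (z : int), j != k ->
            (xi j + xi k != z%:~R * (2 * pi)) /\ (xi j - xi k != z%:~R * (2 * pi)))
  (hBethe : forall j : 'I_n,
     expi (2 * (m.+1)%:R * xi j) =
       (1 - rC q0 * expi (xi j)) / (expi (xi j) - rC q0)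
       * ((1 - rC q1 * expi (xi j)) / (expi (xi j) - rC q1))
       * \prod_(k < n | k != j)
           ((1 - rC q * expi (xi j + xi k)) / (expi (xi j + xi k) - rC q)
            * ((1 - rC q * expi (xi j - xi k)) / (expi (xi j - xi k) - rC q))))
  (mu : 'I_n -> int) (hmu : mu (Ordinal hn) = (m.+1)%:Z) :
  P_b mu xi q q0 = rC q1 * P_b (minus_e1 mu) xi q q0.
Proof.
case: n hn xi hxi1 hxi2 hBethe mu hmu => [//|n] hn xi hxi1 hxi2 hBethe mu hmu.
have mu0 : mu ord0 = (m.+1)%:Z by rewrite -hmu; congr mu; apply: val_inj.
apply/eqP; rewrite -subr_eq0 /P_b mulr_sumr -sumrB; apply/eqP.
apply: big1 => s _; rewrite mulr_sumr -sumrB.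
exact: (perm_difference_vanishes hq hq0 hq1 hxi1 hxi2 hBethe mu0).
Qed.
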